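(* Let $\mathcal{T}$ be a $K$-decomposition of a matroid $\mathcal{M}$ with rank function $r$, $K\ge1$, and let $v$ be a node of $\mathcal{T}$. Let $E_v$ be the set of elements of $\mathcal{M}$ corresponding to the leaves of the subtree of $\mathcal{T}$ rooted at $v$, and $\overline{E_v}$ the set of the remaining elements. If $F_1,F_2\subseteq E_v$ are such that $v$ receives the same color for $F_1$ as for $F_2$, then for every $F\subseteq\overline{E_v}$, $$r(F)+r(F_1)-r(F\cup F_1)=r(F)+r(F_2)-r(F\cup F_2).$$
   Context: A $K$-decomposition ($K\ge1$ an integer) of a matroid $\mathcal{M}$ is a rooted tree $\mathcal{T}$ such that the leaves of $\mathcal{T}$ correspond one-to-one to the elements of $\mathcal{M}$ and record whether the corresponding element is a loop, and each inner node $v$ has exactly two children and is equipped with functions $\varphi_v:\{0,\dots,K\}^2\to\{0,\dots,K\}$ and $\varphi_v^r:\{0,\dots,K\}^2\to\mathbb{N}$. For a subset $F$ of the ground set, color and label the nodes as follows: a leaf whose element is in $F$ gets color $1$, other leaves color $0$; a leaf whose element is in $F$ and is not a loop gets label $1$, other leaves label $0$; an inner node $v$ whose two children have colors $\gamma_1,\gamma_2$ and labels $\lambda_1,\lambda_2$ gets color $\varphi_v(\gamma_1,\gamma_2)$ and label $\lambda_1+\lambda_2-\varphi_v^r(\gamma_1,\gamma_2)$. It is required that for every $F$ the label of the root equals $r(F)$, and that for $F=\emptyset$ all nodes get color $0$ and label $0$. ''The color of $v$ for $F$'' means the color given to $v$ by this procedure applied to $F$. *)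

From HB Require Import structures.
From mathcomp Require Import all_boot all_order all_algebra.
Set Implicit Arguments. Unset Strict Implicit. Unset Printing Implicit Defensive.
Import Order.TTheory GRing.Theory Num.Theory.

Definition is_matroid_rank (T : finType) (r : {set T} -> nat) : Prop :=
  [/\ forall X : {set T}, (r X <= #|X|)%N,
      forall X Y : {set T}, X \subset Y -> (r X <= r Y)%N &
      forall X Y : {set T}, (r (X :|: Y) + r (X :&: Y) <= r X + r Y)%N].

Definition is_loop (T : finType) (r : {set T} -> nat) (e : T) : bool :=
  r [set e] == 0%N.

(* Rooted binary trees: leaves carry an element and a loop flag; inner nodes
   carry phi : {0..K}^2 -> {0..K} and phi^r : {0..K}^2 -> N. *)
Inductive dtree (T : Type) (K : nat) : Type :=
| Leaf : T -> bool -> dtree T K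
| Node : ('I_K.+1 -> 'I_K.+1 -> 'I_K.+1) -> ('I_K.+1 -> 'I_K.+1 -> nat) ->
         dtree T K -> dtree T K -> dtree T K.

Arguments Leaf {T K}.
Arguments Node {T K}.

Fixpoint leaves (T : Type) (K : nat) (t : dtree T K) : seq (T * bool) :=
  match t with
  | Leaf e b => [:: (e, b)]
  | Node _ _ l r => leaves l ++ leaves r
  end.

(* v is a node of t (i.e. the subtree rooted at some node of t) *)
Inductive subtree (T : Type) (K : nat) (v : dtree T K) : dtree T K -> Prop :=
| sub_refl : subtree v v
| sub_left : forall phi phir l r, subtree v l -> subtree v (Node phi phir l r)
| sub_right : forall phi phir l r, subtree v r -> subtree v (Node phi phir l r).

Fixpoint color (T : finType) (K : nat) (F : {set T}) (t : dtree T K) : 'I_K.+1 :=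
  match t with
  | Leaf e _ => inord (e \in F)
  | Node phi _ l r => phi (color F l) (color F r)
  end.

(* label of the root of t for F (an integer: literal reading of l1+l2-phi^r) *)
Fixpoint label (T : finType) (K : nat) (F : {set T}) (t : dtree T K) : int :=
  match t with
  | Leaf e b => Posz ((e \in F) && ~~ b)
  | Node phi phir l r =>
      (label F l + label F r - Posz (phir (color F l) (color F r)))%R
  end.

Definition elems (T : finType) (K : nat) (v : dtree T K) : {set T} :=
  [set e | e \in map fst (leaves v)].

Definition is_Kdecomposition (T : finType) (K : nat) (r : {set T} -> nat)
  (t : dtree T K) : Prop :=
  [/\ perm_eq (map fst (leaves t)) (enum T),
      all (fun p : T * bool => p.2 == is_loop r p.1) (leaves t),
      forall F : {set T}, label F t = Posz (r F) &
      forall v, subtree v t -> color set0 v = ord0 /\ label set0 v = 0%R].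

From HB Require Import structures.
From mathcomp Require Import all_boot all_order all_algebra.
From mathcomp Require Import zify.
Import Order.TTheory GRing.Theory Num.Theory.
Set Implicit Arguments. Unset Strict Implicit.

(* The color and the label of a node w for a set X only depend on
   X restricted to the elements E_w below w (locality).  Hence, if v is a node
   of a decomposition t whose leaves are pairwise distinct, and F is disjoint
   from E_v, then walking from v up to the root of t only combines the data of
   v with data of sibling subtrees, which see F only.  So there are functions
   cf, lf of the color at v such that, for every G included in E_v, the root
   of t gets color cf (color G v) and label label G v + lf (color G v) for
   F u G (context lemma).  Since the root label is the rank, this gives
   r (F u G) = label G v + g_F (color G v) for some g_F.  Applying this to F
   and to the empty set, the quantity r F + r G - r (F u G) equals
   r F + g_0 (color G v) - g_F (color G v), which only depends on the color
   of v for G: this is lemma6. *)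

Section Locality.

Variables (T : finType) (K : nat).
Implicit Types (w v t l rr : dtree T K) (F G X Y : {set T}).

Lemma elemsE w e : (e \in elems w) = (e \in map fst (leaves w)).
Proof. by rewrite inE. Qed.

Lemma elems_node phi phir l rr :
  elems (Node phi phir l rr) = elems l :|: elems rr.
Proof. by apply/setP=> e; rewrite !inE /= map_cat mem_cat. Qed.

Lemma locality w X Y :
  {in elems w, X =i Y} -> color X w = color Y w /\ label X w = label Y w.
Proof.
elim: w => [e b|phi phir l IHl rr IHr] /= XY.
  by rewrite XY // elemsE inE.
have [|-> ->] := IHl; first by move=> e he; rewrite XY // elems_node inE he.
have [|-> ->] := IHr; first by move=> e he; rewrite XY // elems_node inE he orbT.
by [].
Qed.

Lemma locality_union w F G :
  [disjoint G & elems w] ->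
  color (F :|: G) w = color F w /\ label (F :|: G) w = label F w.
Proof.
move=> dG; apply: locality => e ew.
by rewrite inE (disjointFl dG ew) orbF.
Qed.

Lemma subtree_elems v t : subtree v t -> elems v \subset elems t.
Proof.
elim=> [|phi phir l rr _ IH|phi phir l rr _ IH]; first exact: subxx.
  by rewrite elems_node (subset_trans IH) ?subsetUl.
by rewrite elems_node (subset_trans IH) ?subsetUr.
Qed.

Lemma disjoint_children phi phir l rr :
  uniq (map fst (leaves (Node phi phir l rr))) -> [disjoint elems l & elems rr].
Proof.
rewrite /= map_cat cat_uniq => /and3P[_ /hasPn dlr _].
apply/pred0P=> e /=; rewrite !elemsE.
by apply/negbTE/andP=> -[el er]; have := dlr e er; rewrite /= el.
Qed.

Lemma context_of_subtree v t :
  subtree v t -> uniq (map fst (leaves t)) -> forall F,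
  [disjoint F & elems v] ->
  exists (cf : 'I_K.+1 -> 'I_K.+1) (lf : 'I_K.+1 -> int),
  forall G, G \subset elems v ->
    color (F :|: G) t = cf (color G v) /\
    label (F :|: G) t = (label G v + lf (color G v))%R.
Proof.
elim=> [|phi phir l rr sv IH|phi phir l rr sv IH] ut F dF.
- exists id, (fun _ => 0%R) => G _; rewrite addr0.
  by apply: locality => e ev; rewrite inE (disjointFl dF ev).
- move: (ut); rewrite /= map_cat cat_uniq => /and3P[ul _ _].
  have [cf [lf H]] := IH ul F dF.
  exists (fun c => phi (cf c) (color F rr)),
    (fun c => lf c + label F rr - Posz (phir (cf c) (color F rr)))%R => G sG.
  have dG : [disjoint G & elems rr].
    apply: disjointWl (disjoint_children ut).
    exact: subset_trans sG (subtree_elems sv).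
  have [-> ->] := H G sG; have [-> ->] := locality_union F dG.
  by rewrite !addrA.
- move: (ut); rewrite /= map_cat cat_uniq => /and3P[_ _ ur].
  have [cf [lf H]] := IH ur F dF.
  exists (fun c => phi (color F l) (cf c)),
    (fun c => label F l + lf c - Posz (phir (color F l) (cf c)))%R => G sG.
  have dG : [disjoint G & elems l].
    rewrite disjoint_sym; apply: disjointWr (disjoint_children ut).
    exact: subset_trans sG (subtree_elems sv).
  have [-> ->] := H G sG; have [-> ->] := locality_union F dG.
  by split=> //; rewrite addrCA !addrA.
Qed.

End Locality.

Lemma rank_through_node (T : finType) (r : {set T} -> nat) (K : nat)
  (t v : dtree T K) (F : {set T}) :
  is_Kdecomposition r t -> subtree v t -> [disjoint F & elems v] ->
  exists g : 'I_K.+1 -> int, forall G : {set T}, G \subset elems v ->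
    Posz (r (F :|: G)) = (label G v + g (color G v))%R.
Proof.
case=> hp _ hlab _ hv dF.
have ut : uniq (map fst (leaves t)) by rewrite (perm_uniq hp) enum_uniq.
have [cf [g H]] := context_of_subtree hv ut dF.
by exists g => G sG; rewrite -hlab; case: (H G sG).
Qed.

Theorem lemma6 (T : finType) (r : {set T} -> nat) (K : nat)
  (hM : is_matroid_rank r) (hK : (1 <= K)%N) (t : dtree T K)
  (ht : is_Kdecomposition r t) (v : dtree T K) (hv : subtree v t)
  (F1 F2 : {set T}) (h1 : F1 \subset elems v) (h2 : F2 \subset elems v)
  (hc : color F1 v = color F2 v) (F : {set T}) (hF : F \subset ~: elems v) :
  (Posz (r F) + Posz (r F1) - Posz (r (F :|: F1)) =
   Posz (r F) + Posz (r F2) - Posz (r (F :|: F2)))%R.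
Proof.
have dF : [disjoint F & elems v] by rewrite disjoints_subset.
have [g Hg] := rank_through_node ht hv dF.
have d0 : [disjoint set0 & elems v] by rewrite disjoints_subset sub0set.
have [g0 Hg0] := rank_through_node ht hv d0.
have rankE (G : {set T}) : G \subset elems v -> Posz (r G) = (label G v + g0 (color G v))%R.
  by move=> sG; rewrite -Hg0 // set0U.
rewrite (rankE F1) // (rankE F2) // Hg // Hg // hc.
lia.
Qed.
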